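(* Let $f,g:\mathcal{O}\to\mathcal{F}$ be scaling maps with scaling ratios $q^{\lambda_f}$ and $q^{\lambda_g}$, where $\lambda_f>\lambda_g\ge0$, and let $\tilde f(x)=[f(x)]$, $\tilde g(x)=[g(x)]$. Let $D\subset\mathcal{O}$ be a disk of radius $q^{-\gamma}$ with $0\le\gamma\le\lambda_f-\lambda_g$. Then $$\mu\big(\tilde f^{-1}(D)\cap\tilde g^{-1}(D)\big)=\mathbb{E}\big(1_D\circ\tilde f\cdot 1_D\circ\tilde g\big)=\mu(D)^2,$$ where $\mathbb{E}$ is expectation with respect to the normalized Haar measure $\mu$ on $\mathcal{O}$.
   Context: $\mathcal{F}$ is a non-Archimedean local field with valuation ring $\mathcal{O}$, maximal ideal $\mathfrak{p}$, $q=\#\mathcal{O}/\mathfrak{p}$, normalized absolute value $|\cdot|_\mathfrak{p}$, prime element $\pi$. Fix representatives $C\subset\mathcal{O}$ of $\mathcal{O}/\mathfrak{p}$ with $0\in C$; writing $x=\sum_{n\ge v}c_n\pi^n$ ($c_n\in C$), $[x]=\sum_{n\ge0}c_n\pi^n$. A disk of radius $q^{k}$ is $\{x:|x-a|_\mathfrak{p}\le q^k\}$. A map $f:\Omega\to\mathcal{F}$ is scaling with ratio $q^\lambda$ if $|f(x)-f(y)|_\mathfrak{p}=q^\lambda|x-y|_\mathfrak{p}$ for all $x,y$. $\mu$ is Haar measure with $\mu(\mathcal{O})=1$; $1_D$ is the indicator of $D$. *)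

From HB Require Import structures.
From Stdlib Require Import ClassicalEpsilon.
From mathcomp Require Import all_boot all_order all_algebra.
From mathcomp Require Import all_classical all_reals all_analysis.
Set Implicit Arguments. Unset Strict Implicit. Unset Printing Implicit Defensive.
Import Order.TTheory GRing.Theory Num.Theory.
Local Open Scope classical_set_scope.
Local Open Scope ring_scope.

Section LocalField.
Variables (R : realType) (F : fieldType).

(** A non-Archimedean local field: [F] together with its normalized
    absolute value [absv], residue-field cardinality [q], a prime element
    [pi] and a (duplicate-free) list [C] of representatives of O/p with
    0 in C. *)
Definition nonarch_local_field (absv : F -> R) (q : nat) (pi : F) (C : seq F)
  : Prop :=
  (1 < q)%N /\
      (forall x, absv x = 0 <-> x = 0) /\
      (forall x y, absv (x * y) = absv x * absv y) /\
      (forall x y, absv (x + y) <= Num.max (absv x) (absv y)) /\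
      (forall x, x != 0 -> exists k : int, absv x = (q%:R : R) ^ k) /\
      absv pi = (q%:R : R)^-1 /\
      (size C = q /\ uniq C /\ 0 \in C /\
          (forall c, c \in C -> absv c <= 1) /\
          (forall c c', c \in C -> c' \in C -> c != c' -> absv (c - c') = 1) /\
          (forall x, absv x <= 1 -> exists2 c, c \in C & absv (x - c) < 1)) /\
      (forall u : nat -> F,
        (forall eps : R, 0 < eps -> exists N : nat, forall m n : nat,
            (N <= m)%N -> (N <= n)%N -> absv (u m - u n) < eps) ->
        exists l : F, forall eps : R, 0 < eps -> exists N : nat,
            forall n : nat, (N <= n)%N -> absv (u n - l) < eps).

Definition disk (absv : F -> R) (q : nat) (a : F) (k : int) : set F :=
  [set x | absv (x - a) <= (q%:R : R) ^ k].

Definition ring_O (absv : F -> R) : set F := [set x | absv x <= 1].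

Definition disks (absv : F -> R) (q : nat) : set (set F) :=
  [set D | exists (a : F) (k : int), D = disk absv q a k].

Definition scaling (absv : F -> R) (q : nat) (f : F -> F) (lam : int) : Prop :=
  forall x y, absv x <= 1 -> absv y <= 1 ->
    absv (f x - f y) = (q%:R : R) ^ lam * absv (x - y).

Definition frac_part (pi : F) (C : seq F) (z : F) : Prop :=
  exists (k : nat) (c : nat -> F),
    (forall i, c i \in C) /\ z = \sum_(i < k) c i * pi ^- i.+1.

(** y = [x]: x = sum_{n>=v} c_n pi^n and y = sum_{n>=0} c_n pi^n, i.e.
    y is in O and x - y is the (finite) negative-index part. *)
Definition is_bracket (absv : F -> R) (pi : F) (C : seq F) (x y : F) : Prop :=
  absv y <= 1 /\ frac_part pi C (x - y).

Definition bracket (absv : F -> R) (pi : F) (C : seq F) (x : F) : F :=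
  epsilon (inhabits (0 : F)) (is_bracket absv pi C x).

End LocalField.

(** F viewed as a pointed type, then as the measurable space whose
    sigma-algebra is generated by the disks (= Borel sets of F). *)
Definition ptF (F : fieldType) : Type := F.
HB.instance Definition _ (F : fieldType) := Choice.on (ptF F).
HB.instance Definition _ (F : fieldType) := isPointed.Build (ptF F) (0 : F).

Definition Fmeas (R : realType) (F : fieldType) (absv : F -> R) (q : nat) :=
  g_sigma_algebraType (disks absv q : set (set (ptF F))).

Definition haar_normalized (R : realType) (F : fieldType) (absv : F -> R)
  (q : nat) (mu : {measure set (Fmeas absv q) -> \bar R}) : Prop :=
  mu (ring_O absv) = 1%E /\
  (forall (b : F) (A : set (Fmeas absv q)), measurable A ->
     mu ((fun x : F => b + x) @` A) = mu A).

From HB Require Import structures.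
From Stdlib Require Import ClassicalEpsilon.
From mathcomp Require Import all_boot all_order all_algebra.
From mathcomp Require Import all_classical all_reals all_analysis.
From mathcomp Require Import zify.
From mathcomp.algebra_tactics Require Import ring.
Import Order.TTheory GRing.Theory Num.Theory.
Local Open Scope classical_set_scope.
Local Open Scope ring_scope.
Set Implicit Arguments. Unset Strict Implicit. Unset Printing Implicit Defensive.

(* The bracket is additive at unit scale: [z] - [z'] = z - z' whenever |z - z'| <= 1.
   So if h scales by q^lam, then on each disk of radius q^-lam in O the map h~ = [h] differs
   from h by a constant, and h maps such a disk onto a disk of radius 1: points of O at mutual
   distance 1 meet every residue class, which lets one hit any target digit by digit.  Hence
   h~^-1 D has density mu D = q^-gam on every disk of radius q^-lam.  Now g~^-1 D is a union
   of disks of radius q^-(gam + lg), and gam + lg <= lf, so f~^-1 D has density q^-gam inside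
   each of them: mu (f~^-1 D `&` g~^-1 D) = q^-gam * mu (g~^-1 D) = q^-2gam. *)

Lemma integral_indic_pair (R : realType) d (T : measurableType d)
    (nu : {measure set T -> \bar R}) (U : Type) (D : set U) (u v : T -> U) (A : set T) :
  measurable A -> measurable (A `&` (u @^-1` D `&` v @^-1` D)) ->
  (\int[nu]_(x in A) ((\1_D (u x) : R) * \1_D (v x))%:E)%E =
    nu (A `&` (u @^-1` D `&` v @^-1` D)).
Proof.
move=> mA mI.
transitivity (\int[nu]_(x in A) (\1_(A `&` (u @^-1` D `&` v @^-1` D)) x)%:E)%E.
  apply: eq_integral => x /[!inE] Ax.
  by rewrite !indicI /= [\1_A x]indicE mem_set // mul1r.
by rewrite integral_indic // setIAC setIid.
Qed.

Section LocalField.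
Variables (R : realType) (F : fieldType) (absv : F -> R) (q : nat) (pi : F) (C : seq F).
Hypothesis HF : nonarch_local_field absv q pi C.
Local Notation Q := (q%:R : R).

Lemma q_gt1 : (1 < q)%N. Proof. by case: HF. Qed.
Lemma absv_eq0 x : (absv x == 0) = (x == 0).
Proof. by case: HF => _ [H _]; apply/eqP/eqP => /H. Qed.
Lemma absvM x y : absv (x * y) = absv x * absv y.
Proof. by case: HF => _ [_ [H _]]; apply: H. Qed.
Lemma absvD_max x y : absv (x + y) <= Num.max (absv x) (absv y).
Proof. by case: HF => _ [_ [_ [H _]]]; apply: H. Qed.
Lemma absv_expz x : x != 0 -> exists k : int, absv x = Q ^ k.
Proof. by case: HF => _ [_ [_ [_ [H _]]]]; apply: H. Qed.
Lemma absv_pi : absv pi = Q^-1.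
Proof. by case: HF => _ [_ [_ [_ [_ [H _]]]]]. Qed.
Lemma size_C : size C = q.
Proof. by case: HF => _ [_ [_ [_ [_ [_ [[H _] _]]]]]]. Qed.
Lemma uniq_C : uniq C.
Proof. by case: HF => _ [_ [_ [_ [_ [_ [[_ [H _]] _]]]]]]. Qed.
Lemma mem0_C : 0 \in C.
Proof. by case: HF => _ [_ [_ [_ [_ [_ [[_ [_ [H _]]] _]]]]]]. Qed.
Lemma absv_C c : c \in C -> absv c <= 1.
Proof. by case: HF => _ [_ [_ [_ [_ [_ [[_ [_ [_ [H _]]]] _]]]]]]; apply: H. Qed.
Lemma absvB_C c c' : c \in C -> c' \in C -> c != c' -> absv (c - c') = 1.
Proof. by case: HF => _ [_ [_ [_ [_ [_ [[_ [_ [_ [_ [H _]]]]] _]]]]]]; apply: H. Qed.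
Lemma residue_C x : absv x <= 1 -> exists2 c, c \in C & absv (x - c) < 1.
Proof. by case: HF => _ [_ [_ [_ [_ [_ [[_ [_ [_ [_ [_ H]]]]] _]]]]]]; apply: H. Qed.

Lemma Q_gt1 : 1 < Q. Proof. by rewrite ltr1n q_gt1. Qed.
Lemma Q_neq0 : Q != 0. Proof. by rewrite gt_eqF // (lt_trans ltr01 Q_gt1). Qed.
Lemma Qz_gt0 k : 0 < Q ^ k. Proof. by rewrite exprz_gt0 // (lt_trans ltr01 Q_gt1). Qed.
Lemma Qz_ge0 k : 0 <= Q ^ k. Proof. exact/ltW/Qz_gt0. Qed.
Lemma QzD m n : Q ^ m * Q ^ n = Q ^ (m + n). Proof. by rewrite expfzDr // Q_neq0. Qed.
Lemma Qz_le m n : (Q ^ m <= Q ^ n) = (m <= n). Proof. by rewrite (ler_eXz2l Q_gt1). Qed.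
Lemma Qz_lt m n : (Q ^ m < Q ^ n) = (m < n). Proof. by rewrite (ltr_eXz2l Q_gt1). Qed.
Lemma Qz_le1 k : (Q ^ k <= 1) = (k <= 0). Proof. by rewrite -(expr0z Q) Qz_le. Qed.

Lemma absv0 : absv 0 = 0. Proof. by apply/eqP; rewrite absv_eq0. Qed.
Lemma absv_ge0 x : 0 <= absv x.
Proof.
have [->|/absv_expz [k ->]] := eqVneq x 0; last exact: Qz_ge0.
by rewrite absv0.
Qed.
Lemma absv1 : absv 1 = 1.
Proof.
have nz : absv 1 != 0 by rewrite absv_eq0 oner_neq0.
by apply: (mulfI nz); rewrite -absvM !mulr1.
Qed.
Lemma absvN x : absv (- x) = absv x.
Proof.
have absvN1 : absv (-1) = 1.
  have /eqP : absv (-1) ^+ 2 = 1 by rewrite expr2 -absvM mulrNN mulr1 absv1.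
  rewrite sqrf_eq1 => /orP [/eqP //|/eqP e].
  by have := absv_ge0 (-1); rewrite e ler0N1.
by rewrite -mulN1r absvM absvN1 mul1r.
Qed.
Lemma absvBC x y : absv (x - y) = absv (y - x). Proof. by rewrite -absvN opprB. Qed.

Lemma pi_neq0 : pi != 0.
Proof. by rewrite -absv_eq0 absv_pi invr_eq0 Q_neq0. Qed.
Lemma absv_piz k : absv (pi ^ k) = Q ^ (- k).
Proof.
have absvX x n : absv (x ^+ n) = absv x ^+ n.
  by elim: n => [|n IH]; rewrite ?expr0 ?absv1 // !exprS absvM IH.
case: k => n; first by rewrite -exprnP absvX absv_pi exprnP exprz_inv.
have absvV x : absv x^-1 = (absv x)^-1.
  have [->|nz] := eqVneq x 0; first by rewrite invr0 absv0 invr0.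
  have nz' : absv x != 0 by rewrite absv_eq0.
  by apply: (mulfI nz'); rewrite -absvM !mulfV // absv1.
by rewrite NegzE -exprnN absvV absvX absv_pi exprnP exprz_inv invr_expz.
Qed.
Lemma pizD m n : pi ^ (m + n) = pi ^ m * pi ^ n. Proof. by rewrite expfzDr // pi_neq0. Qed.

Lemma absv_mulpi_le x k m : (absv (x * pi ^ k) <= Q ^ m) = (absv x <= Q ^ (m + k)).
Proof. by rewrite absvM absv_piz -invr_expz ler_pdivrMr ?Qz_gt0 // QzD. Qed.
Lemma absv_mulpi_le1 x k : (absv (x * pi ^ k) <= 1) = (absv x <= Q ^ k).
Proof. by rewrite -(expr0z Q) absv_mulpi_le add0r. Qed.

Lemma absvD_le x y r : absv x <= r -> absv y <= r -> absv (x + y) <= r.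
Proof. by move=> hx hy; apply: le_trans (absvD_max x y) _; rewrite ge_max hx hy. Qed.
Lemma absvB_le x y r : absv x <= r -> absv y <= r -> absv (x - y) <= r.
Proof. by move=> hx hy; apply: absvD_le; rewrite ?absvN. Qed.
Lemma absvB_lt x y r : absv x < r -> absv y < r -> absv (x - y) < r.
Proof. by move=> hx hy; apply: le_lt_trans (absvD_max x (- y)) _; rewrite gt_max hx absvN hy. Qed.
Lemma absv_ultra x y z r : absv (x - y) <= r -> absv (y - z) <= r -> absv (x - z) <= r.
Proof. by move=> hxy hyz; rewrite -(subrKA y); apply: absvD_le. Qed.
Lemma absvD_eq x y : absv y < absv x -> absv (x + y) = absv x.
Proof.
move=> hyx; apply/eqP; rewrite eq_le; apply/andP; split.
  by apply: le_trans (absvD_max x y) _; rewrite ge_max lexx ltW.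
have := absvD_max (x + y) (- y); rewrite addrK absvN le_max => /orP [//|h].
by have := lt_le_trans hyx h; rewrite ltxx.
Qed.
Lemma absv_lt1 x : absv x < 1 -> absv x <= Q ^ -1.
Proof.
have [->|/absv_expz [m ->]] := eqVneq x 0; first by rewrite absv0 Qz_ge0.
by rewrite -(expr0z Q) Qz_lt Qz_le; lia.
Qed.

Lemma absv_Cpi c k : c \in C -> absv (c * pi ^ k) <= Q ^ (- k).
Proof. by move=> cC; rewrite absv_mulpi_le addNr expr0z absv_C. Qed.
Lemma absvB_Cpi c c' k : c \in C -> c' \in C -> c != c' ->
  absv (c * pi ^ k - c' * pi ^ k) = Q ^ (- k).
Proof. by move=> cC c'C ne; rewrite -mulrBl absvM absvB_C // mul1r absv_piz. Qed.

Definition residue w := nth 0 C (find (fun c => absv (w - c) < 1) C).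

Lemma residueP w : absv w <= 1 -> residue w \in C /\ absv (w - residue w) < 1.
Proof.
move=> /residue_C [c cC hc].
have hasC : has (fun c => absv (w - c) < 1) C by apply/hasP; exists c.
by split; [rewrite /residue mem_nth // -has_find | exact: (nth_find 0 hasC)].
Qed.

(* Pigeonhole: [q] points of [O] at mutual distance 1 meet every residue class, in particular [p]. *)
Lemma separated_residue (w : F -> F) :
  {in C, forall c, absv (w c) <= 1} ->
  {in C &, forall c c', c != c' -> absv (w c - w c') = 1} ->
  exists2 c, c \in C & absv (w c) < 1.
Proof.
move=> w1 wsep.
have res_inj : {in C &, injective (residue \o w)}.
  move=> c c' cC c'C /= e; apply/eqP/negPn/negP => ne.
  have [_ r1] := residueP (w1 c cC); have [_ r2] := residueP (w1 c' c'C).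
  by have := absvB_lt r1 r2; rewrite e opprB addrA subrK wsep // ltxx.
have [_ /(_ 0)] := uniq_min_size (s1 := map (residue \o w) C) (s2 := C)
  (ltac:(by rewrite map_inj_in_uniq // uniq_C))
  (ltac:(by move=> r /mapP [c cC ->]; case: (residueP (w1 c cC))))
  (ltac:(by rewrite size_map)).
rewrite mem0_C => /mapP [c cC e0]; exists c => //.
by have [_] := residueP (w1 c cC); rewrite -[residue _]/((residue \o w) c) -e0 subr0.
Qed.

Lemma bracket_expansion (m : nat) x : absv x <= Q ^ m -> exists y (c : nat -> F),
  [/\ absv y <= 1, forall i, c i \in C & x - y = \sum_(i < m) c i * pi ^- i.+1].
Proof.
elim: m x => [|m IH] x hx.
  exists x, (fun=> 0); split; [by rewrite -(expr0z Q) | by move=> _; exact: mem0_C |].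
  by rewrite subrr big_ord0.
set w := x * pi ^ m.+1%:Z.
have [dC hd] : residue w \in C /\ absv (w - residue w) < 1.
  by apply: residueP; rewrite absv_mulpi_le1.
set d := residue w in dC hd.
have hx' : absv (x - d * pi ^- m.+1) <= Q ^ m.
  have -> : x - d * pi ^- m.+1 = (w - d) * pi ^ (- m.+1%:Z).
    by rewrite exprnN mulrBl -mulrA -pizD subrr expr0z mulr1.
  by rewrite absv_mulpi_le; apply: le_trans (absv_lt1 hd) _; rewrite Qz_le; lia.
have [y [c [hy hc E]]] := IH _ hx'.
exists y, (fun i => if i == m then d else c i); split => //; first by move=> i; case: ifP.
rewrite big_ord_recr /= eqxx.
under eq_bigr => i _ do rewrite /= ltn_eqF //.
by rewrite -E addrAC subrK.
Qed.

Lemma bracketP x : is_bracket absv pi C x (bracket absv pi C x).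
Proof.
apply: epsilon_spec.
have [m hm] : exists m : nat, absv x <= Q ^ m.
  have [->|/absv_expz [k ->]] := eqVneq x 0; first by exists 0%N; rewrite absv0 Qz_ge0.
  by exists `|k|%N; rewrite Qz_le; lia.
have [y [c [hy hc E]]] := bracket_expansion hm.
by exists y; split => //; exists m, c.
Qed.

Lemma absv_bracket x : absv (bracket absv pi C x) <= 1.
Proof. by case: (bracketP x). Qed.

Lemma expansion_eq0 (d : nat -> F) K : (forall i, d i = 0 \/ absv (d i) = 1) ->
  absv (\sum_(i < K) d i * pi ^- i.+1) <= 1 -> \sum_(i < K) d i * pi ^- i.+1 = 0.
Proof.
move=> hd; elim: K => [|K IH]; first by rewrite big_ord0.
rewrite big_ord_recr /=; case: (hd K) => [->|dK1]; first by rewrite mul0r addr0.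
have top : absv (d K * pi ^- K.+1) = Q ^ K.+1.
  by rewrite absvM dK1 mul1r exprnN absv_piz opprK.
have rest : absv (\sum_(i < K) d i * pi ^- i.+1) <= Q ^ K.
  elim/big_ind: _ => [|u v|i _]; [by rewrite absv0 Qz_ge0 | exact: absvD_le |].
  rewrite exprnN absv_mulpi_le.
  have di1 : absv (d i) <= 1 by case: (hd i) => ->; rewrite ?absv0.
  by apply: le_trans di1 _; rewrite -(expr0z Q) Qz_le; have := ltn_ord i; lia.
rewrite addrC absvD_eq; last by rewrite top (le_lt_trans rest) // Qz_lt; lia.
by rewrite top Qz_le1 => ?; exfalso; lia.
Qed.

Lemma frac_part_eq s s' :
  frac_part pi C s -> frac_part pi C s' -> absv (s - s') <= 1 -> s = s'.
Proof.
move=> [k [c [hc ->]]] [k' [c' [hc' ->]]].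
pose K := maxn k k'.
pose pad (k0 : nat) (c0 : nat -> F) i := if (i < k0)%N then c0 i else 0.
have padC k0 c0 i : (forall i, c0 i \in C) -> pad k0 c0 i \in C.
  by move=> h; rewrite /pad; case: ifP => // _; exact: mem0_C.
have padE k0 (c0 : nat -> F) : (k0 <= K)%N ->
    \sum_(i < k0) c0 i * pi ^- i.+1 = \sum_(i < K) pad k0 c0 i * pi ^- i.+1.
  move=> hk; rewrite (big_ord_widen _ (fun i => c0 i * pi ^- i.+1) hk) big_mkcond /=.
  by apply: eq_bigr => i _; rewrite /pad; case: ifP => _ //; rewrite mul0r.
rewrite (padE k) ?leq_maxl // (padE k') ?leq_maxr //.
set E := (X in absv X <= 1 -> _).
have -> : E = \sum_(i < K) (pad k c i - pad k' c' i) * pi ^- i.+1.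
  by rewrite /E -sumrB; apply: eq_bigr => i _; rewrite mulrBl.
move=> close; apply/eqP; rewrite -subr_eq0 -sumrB; apply/eqP.
under eq_bigr do rewrite -mulrBl.
apply: (expansion_eq0 (d := fun i => pad k c i - pad k' c' i)) close => i.
have [->|ne] := eqVneq (pad k c i) (pad k' c' i); first by left; rewrite subrr.
by right; apply: absvB_C ne; apply: padC.
Qed.

Lemma bracketB z z' : absv (z - z') <= 1 ->
  bracket absv pi C z - bracket absv pi C z' = z - z'.
Proof.
move=> h; have [b1 f1] := bracketP z; have [b2 f2] := bracketP z'.
set bz := bracket absv pi C z in b1 f1 *; set bz' := bracket absv pi C z' in b2 f2 *.
have e : z - bz = z' - bz'.
  apply: frac_part_eq f1 f2 _.
  have -> : z - bz - (z' - bz') = (z - z') - (bz - bz') by ring.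
  exact: absvB_le h (absvB_le b1 b2).
transitivity ((z - z') - ((z - bz) - (z' - bz'))); first ring.
by rewrite e subrr subr0.
Qed.

Local Notation Dk b n := (disk absv q b (- ((n : nat) : int))).

Lemma disk_in_O b n x : absv b <= 1 -> Dk b n x -> absv x <= 1.
Proof.
move=> hb hx; rewrite -(subrK b x); apply: absvD_le => //.
by apply: le_trans hx _; rewrite Qz_le1; lia.
Qed.

Lemma scaling_le h lam x z k : scaling absv q h lam -> absv x <= 1 -> absv z <= 1 ->
  (absv (h z - h x) <= Q ^ k) = (absv (z - x) <= Q ^ (k - lam)).
Proof. by move=> Hh hx hz; rewrite Hh // mulrC -ler_pdivlMr ?Qz_gt0 // invr_expz QzD. Qed.

Lemma scaling_preimage_disk h (L j : nat) b x e : scaling absv q h L -> absv b <= 1 ->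
  Dk b L x -> absv (h x - e) <= Q ^ (- j%:Z) ->
  Dk b L `&` h @^-1` Dk e j = Dk x (L + j).
Proof.
move=> Hh hb hbx hxe; have hx := disk_in_O hb hbx.
apply/seteqP; split => z.
  move=> [hbz hze]; have hz := disk_in_O hb hbz.
  have : absv (h z - h x) <= Q ^ (- j%:Z) by apply: absv_ultra hze _; rewrite absvBC.
  by rewrite (scaling_le _ Hh) // => /le_trans; apply; rewrite Qz_le; lia.
move=> hxz; have hbz : Dk b L z.
  by rewrite /disk /=; apply: absv_ultra hbx; apply: le_trans hxz _; rewrite Qz_le; lia.
split => //; apply: absv_ultra hxe.
by rewrite (scaling_le _ Hh) ?(disk_in_O hb hbz) //; apply: le_trans hxz _; rewrite Qz_le; lia.
Qed.

(* One digit per step: the [q] candidates [x0 + c pi^(L+j)] have images at mutual distance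
   [q^-j] around [e], so by [separated_residue] one of them is [q^-(j+1)]-close to [e]. *)
Lemma scaling_approx h (L : nat) b e : scaling absv q h L -> absv b <= 1 ->
  absv (e - h b) <= 1 -> forall j : nat, exists2 x, Dk b L x & absv (h x - e) <= Q ^ (- j%:Z).
Proof.
move=> Hh hb heb; elim => [|j [x0 hbx0 hx0e]].
  exists b; first by rewrite /disk /= subrr absv0 Qz_ge0.
  by rewrite absvBC; apply: le_trans heb _; rewrite -(expr0z Q) Qz_le.
pose n := (L + j)%N; pose y c := x0 + c * pi ^ n%:Z.
have hby c : c \in C -> Dk b L (y c).
  move=> cC; rewrite /disk /= /y addrAC; apply: absvD_le => //.
  by apply: le_trans (absv_Cpi _ cC) _; rewrite Qz_le; lia.
have hy c : c \in C -> absv (y c) <= 1 by move=> cC; exact: disk_in_O hb (hby c cC).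
have hhy c : c \in C -> absv (h (y c) - h x0) <= Q ^ (- j%:Z).
  move=> cC; rewrite (scaling_le _ Hh) ?(disk_in_O hb hbx0) ?hy // /y addrAC subrr add0r.
  by apply: le_trans (absv_Cpi _ cC) _; rewrite Qz_le; lia.
pose w c := (h (y c) - e) * pi ^ (- j%:Z).
have [c cC wc] : exists2 c, c \in C & absv (w c) < 1.
  apply: separated_residue => [c cC | c c' cC c'C ne].
    by rewrite absv_mulpi_le1; apply: absv_ultra (hhy c cC) hx0e.
  rewrite /w -mulrBl opprB addrA subrK absvM Hh ?hy // /y opprD addrACA subrr add0r.
  rewrite absvB_Cpi // absv_piz opprK !QzD -(expr0z Q); congr (_ ^ _); rewrite /n; lia.
exists (y c); first exact: hby.
by have := absv_lt1 wc; rewrite absv_mulpi_le => /le_trans; apply; rewrite Qz_le; lia.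
Qed.

Variable mu : {measure set (Fmeas absv q) -> \bar R}.
Hypothesis Hmu : haar_normalized mu.
Local Notation T := (Fmeas absv q).
Local Notation DT b n := (Dk b n : set T).

Lemma measurable_disk b k : measurable (disk absv q b k : set T).
Proof. by apply: sub_sigma_algebra; exists b, k. Qed.

Lemma disk_partition b (n : nat) :
  Dk b n = \bigcup_(c in [set` C]) Dk (b + c * pi ^ n%:Z) n.+1.
Proof.
apply/seteqP; split => [x hx | x [c /= cC hx]].
  set u := (x - b) * pi ^ (- n%:Z).
  have [rC hr] : residue u \in C /\ absv (u - residue u) < 1.
    by apply: residueP; rewrite absv_mulpi_le1.
  exists (residue u) => //; rewrite /disk /=.
  have -> : x - (b + residue u * pi ^ n%:Z) = (u - residue u) * pi ^ n%:Z.
    by rewrite mulrBl -mulrA -pizD addNr expr0z mulr1 opprD addrA.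
  by rewrite absv_mulpi_le; apply: le_trans (absv_lt1 hr) _; rewrite Qz_le; lia.
rewrite /disk /=; apply: (absv_ultra _ (_ : absv (b + c * pi ^ n%:Z - b) <= _)).
  by apply: le_trans hx _; rewrite Qz_le; lia.
by rewrite addrC addKr absv_Cpi.
Qed.

Lemma trivIset_disk_partition b (n : nat) :
  trivIset [set` C] (fun c => DT (b + c * pi ^ n%:Z) n.+1).
Proof.
move=> c c' /= cC c'C [x [hx hx']]; apply/eqP/negPn/negP => ne.
have hc : absv (b + c * pi ^ n%:Z - x) <= Q ^ (- n.+1%:Z) by rewrite absvBC.
have := absv_ultra hc hx'.
by rewrite opprD addrACA subrr add0r absvB_Cpi // Qz_le; lia.
Qed.

Lemma measure_disk_partition b (n : nat) (S : set T) :
    (forall c, c \in C -> measurable (DT (b + c * pi ^ n%:Z) n.+1 `&` S)) ->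
  measurable (DT b n `&` S) /\
  mu (DT b n `&` S) = (\sum_(c <- C) mu (DT (b + c * pi ^ n%:Z) n.+1 `&` S))%E.
Proof.
move=> mS; rewrite disk_partition setI_bigcupl.
split; first exact: fin_bigcup_measurable (finite_seq C) _.
rewrite measure_fin_bigcup; first by rewrite [RHS]fsbig_seq // uniq_C.
- exact: finite_seq.
- exact: trivIset_setIr (@trivIset_disk_partition b n).
- by move=> c /= cC; apply: mS.
Qed.

Lemma measure_disk_shift b k : mu (disk absv q b k) = mu (disk absv q 0 k).
Proof.
have -> : disk absv q b k = (fun x => b + x) @` disk absv q 0 k.
  apply/seteqP; split => [x hx | _ [y hy <-]]; last by rewrite /disk /= addrC addKr -[y]subr0.
  by exists (x - b); rewrite /disk /= ?subr0 // addrC subrK.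
by rewrite (proj2 Hmu) //; exact: measurable_disk.
Qed.

Lemma disk_O : Dk 0 0 = ring_O absv.
Proof. by apply/seteqP; split => x; rewrite /disk /ring_O /= subr0 oppr0 expr0z. Qed.

Lemma measure_disk b (n : nat) : mu (DT b n) = (Q ^ (- n%:Z))%:E.
Proof.
rewrite measure_disk_shift; elim: n => [|n IH]; first by rewrite disk_O (proj1 Hmu).
have [_] := measure_disk_partition (b := 0) (n := n) (S := setT)
  (fun c _ => measurableI _ _ (measurable_disk _ _) measurableT).
rewrite !setIT IH.
under eq_bigr do rewrite setIT measure_disk_shift.
rewrite big_const_seq count_predT iter_addr_0 size_C.
case: (mu _) => [r| |] e.
- have {}e : r * Q = Q ^ (- n%:Z) by rewrite mulr_natr; apply: EFin_inj; rewrite e EFin_natmul.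
  congr (_%:E); apply: (mulIf Q_neq0); rewrite e -[Q in RHS]expr1z QzD; congr (_ ^ _); lia.
- by move: e; case: q q_gt1 => // q' _; rewrite -[(+oo%E *+ _)%R]/(+oo *+ q'.+1)%E enatmul_pinfty.
- by move: e; case: q q_gt1 => // q' _; rewrite -[(-oo%E *+ _)%R]/(-oo *+ q'.+1)%E enatmul_ninfty.
Qed.

Definition rel_density (j : nat) (S G : set T) (al : R) :=
  forall b, absv b <= 1 -> [/\ measurable (DT b j `&` S), measurable (DT b j `&` G) &
    mu (DT b j `&` S) = (al%:E * mu (DT b j `&` G))%E].

Lemma rel_density_pred j S G al : 0 <= al ->
  rel_density j.+1 S G al -> rel_density j S G al.
Proof.
move=> al0 H b hb.
have hbc c : c \in C -> absv (b + c * pi ^ j%:Z) <= 1.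
  by move=> cC; apply: absvD_le => //; apply: le_trans (absv_Cpi _ cC) _; rewrite Qz_le1; lia.
have [mS ->] : measurable (DT b j `&` S) /\ _ := measure_disk_partition
  (fun c cC => let: And3 m _ _ := H _ (hbc c cC) in m).
have [mG ->] : measurable (DT b j `&` G) /\ _ := measure_disk_partition
  (fun c cC => let: And3 _ m _ := H _ (hbc c cC) in m).
split => //; rewrite ge0_sume_distrr; last by move=> c _; exact: measure_ge0.
rewrite big_seq [in RHS]big_seq; apply: eq_bigr => c cC.
by case: (H _ (hbc c cC)).
Qed.

Lemma rel_density_le k j S G al : 0 <= al -> (j <= k)%N ->
  rel_density k S G al -> rel_density j S G al.
Proof.
move=> al0 /subnKC <-; elim: (k - j)%N => [|d IH]; first by rewrite addn0.
by rewrite addnS => /(rel_density_pred al0)/IH.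
Qed.

Lemma bracket_preimage_density h (L gam : nat) a : scaling absv q h L -> absv a <= 1 ->
  rel_density L ((fun x => bracket absv pi C (h x)) @^-1` Dk a gam) setT (Q ^ (- gam%:Z)).
Proof.
move=> Hh ha b hb; rewrite setIT.
set s := h b - bracket absv pi C (h b).
have shift : Dk b L `&` (fun x => bracket absv pi C (h x)) @^-1` Dk a gam =
             Dk b L `&` h @^-1` Dk (a + s) gam.
  have bracket_shift z : Dk b L z -> bracket absv pi C (h z) - a = h z - (a + s).
    move=> hbz; have hzb : absv (h z - h b) <= 1.
      by rewrite -(expr0z Q) (scaling_le _ Hh) ?(disk_in_O hb hbz) // sub0r.
    transitivity ((bracket absv pi C (h z) - bracket absv pi C (h b)) - a
                  + bracket absv pi C (h b)); first ring.
    by rewrite bracketB // /s; ring.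
  apply/seteqP; split => z [hbz hz]; split => //.
    by change (absv (h z - (a + s)) <= Q ^ (- gam%:Z)); rewrite -bracket_shift.
  by change (absv (bracket absv pi C (h z) - a) <= Q ^ (- gam%:Z)); rewrite bracket_shift.
have hs : absv (a + s - h b) <= 1.
  have -> : a + s - h b = a - bracket absv pi C (h b) by rewrite /s; ring.
  exact: absvB_le ha (absv_bracket _).
have [x hbx hx] := scaling_approx Hh hb hs gam.
rewrite shift (scaling_preimage_disk Hh hb hbx hx).
split; [exact: measurable_disk | exact: measurable_disk |].
by rewrite !measure_disk -EFinM QzD; congr (_ ^ _)%:E; lia.
Qed.

Lemma bracket_preimage_const h (L gam : nat) a b z : scaling absv q h L -> absv b <= 1 ->
    Dk b (gam + L) z ->
  Dk a gam (bracket absv pi C (h z)) <-> Dk a gam (bracket absv pi C (h b)).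
Proof.
move=> Hh hb hbz.
have hzb : absv (h z - h b) <= Q ^ (- gam%:Z).
  by rewrite (scaling_le _ Hh) ?(disk_in_O hb hbz) //; apply: le_trans hbz _; rewrite Qz_le; lia.
have e : bracket absv pi C (h z) - bracket absv pi C (h b) = h z - h b.
  by apply: bracketB; apply: le_trans hzb _; rewrite Qz_le1; lia.
rewrite /disk /=; split => hD.
  by apply: absv_ultra hD; rewrite absvBC e.
by apply: absv_ultra _ hD; rewrite e.
Qed.

Lemma measure_bracket_preimages f g (LF LG gam : nat) a :
    scaling absv q f LF -> scaling absv q g LG -> (gam + LG <= LF)%N -> absv a <= 1 ->
  let I := ring_O absv `&` ((fun x => bracket absv pi C (f x)) @^-1` Dk a gam `&`
                            (fun x => bracket absv pi C (g x)) @^-1` Dk a gam) in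
  measurable (I : set T) /\ mu I = (Q ^ (- gam%:Z) * Q ^ (- gam%:Z))%:E.
Proof.
move=> Hf Hg hle ha I.
set al := Q ^ (- gam%:Z); have al0 : 0 <= al by exact: Qz_ge0.
set Tf : set T := (fun x => bracket absv pi C (f x)) @^-1` Dk a gam.
set Tg : set T := (fun x => bracket absv pi C (g x)) @^-1` Dk a gam.
have dens_g := rel_density_le al0 (leq0n LG) (bracket_preimage_density gam Hg ha).
have dens_f := rel_density_le al0 hle (bracket_preimage_density gam Hf ha).
have dens_fg : rel_density (gam + LG) (Tf `&` Tg) Tg al.
  move=> b hb; have [mf _ ef] := dens_f b hb.
  have [Tgb|nTgb] := pselect (Tg b).
    have sub : DT b (gam + LG) `<=` Tg.
      by move=> z hz; exact: (proj2 (bracket_preimage_const a Hg hb hz) Tgb).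
    rewrite setIA (setIidl sub) -(setIA _ Tf) (setIC Tf) setIA (setIidl sub).
    by split => //; [exact: measurable_disk | rewrite ef setIT].
  have disj : DT b (gam + LG) `&` Tg = set0.
    by apply/seteqP; split => // z [hz /(bracket_preimage_const a Hg hb hz)].
  by rewrite setIA (setIC _ Tf) -setIA disj setI0 measure0 mule0.
have O0 : absv (0 : F) <= 1 by rewrite absv0 ler01.
have [mI _ eI] := rel_density_le al0 (leq0n _) dens_fg O0.
have [_ _ eG] := dens_g 0 O0.
rewrite /I -disk_O; split => //.
by rewrite eI eG setIT measure_disk oppr0 expr0z mule1.
Qed.

End LocalField.

Theorem lemma3p2 (R : realType) (F : fieldType) (absv : F -> R) (q : nat)
  (pi : F) (C : seq F) (HF : nonarch_local_field absv q pi C)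
  (mu : {measure set (Fmeas absv q) -> \bar R}) (Hmu : haar_normalized mu)
  (f g : F -> F) (lf lg : int)
  (Hf : scaling absv q f lf) (Hg : scaling absv q g lg)
  (Hlfg : lg < lf) (Hlg : 0 <= lg)
  (a : F) (Ha : absv a <= 1) (gam : int) (Hgam0 : 0 <= gam) (Hgam1 : gam <= lf - lg) :
  let tf := fun x => bracket absv pi C (f x) in
  let tg := fun x => bracket absv pi C (g x) in
  let D := disk absv q a (- gam) in
  mu (ring_O absv `&` (tf @^-1` D `&` tg @^-1` D)) =
    (\int[mu]_(x in ring_O absv) ((\1_D (tf x) : R) * \1_D (tg x))%:E)%E /\
  (\int[mu]_(x in ring_O absv) ((\1_D (tf x) : R) * \1_D (tg x))%:E)%E =
    (mu D ^+ 2)%E.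
Proof.
case: lg Hg Hlfg Hgam1 Hlg => [LG|//] Hg Hlfg Hgam1 _.
case: gam Hgam0 Hgam1 => [GM|//] _ Hgam1.
case: lf Hf Hlfg Hgam1 => [LF|//] Hf _ Hgam1 tf tg D.
have hle : (GM + LG <= LF)%N by lia.
have [mI eI] := measure_bracket_preimages HF Hmu Hf Hg hle Ha.
have mO : measurable (ring_O absv : set (Fmeas absv q)).
  by rewrite -(disk_O _ q); exact: measurable_disk.
rewrite integral_indic_pair //; split => //.
by rewrite eI expe2 (measure_disk HF Hmu).
Qed.
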